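(* Fix a point $\mathbf{x}'\in\Omega\subset\mathbb{R}^2$ and let $\mathbf{F}=[\mathbf{F}_1,\mathbf{F}_2]\in\mathbb{R}^{3\times 2}$ have $\operatorname{rank}(\mathbf{F})=2$. Set $$\mathbf{b}(\mathbf{F})=\frac{\mathbf{F}_1\times\mathbf{F}_2}{|\mathbf{F}_1\times\mathbf{F}_2|^2}\in\mathbb{R}^3 .$$ Then $$W_{str}(\mathbf{x}',\mathbf{F})=W_{3D}\big((\mathbf{x}',0),[\mathbf{F},\mathbf{b}(\mathbf{F})]\big),$$ where $[\mathbf{F},\mathbf{b}(\mathbf{F})]\in\mathbb{R}^{3\times3}$ is the matrix whose first two columns are those of $\mathbf{F}$ and whose third column is $\mathbf{b}(\mathbf{F})$.
   Context: Let $\Omega\subset\mathbb{R}^2$ be a bounded Lipschitz domain. At the point $\mathbf{x}'$ we are given scalars $s,s_0$ with $-1<s,s_0<\infty$ (values at $\mathbf{x}'$ of given functions $s,s_0\in L^\infty(\Omega)$) and a unit vector $\mathbf{m}\in\mathbb{S}^1\subset\mathbb{R}^2$ (the value at $\mathbf{x}'$ of the blueprinted director field). We identify $\mathbf{m}$ with $(\mathbf{m},0)^T\in\mathbb{R}^3$ whenever a vector in $\mathbb{R}^3$ is needed. Define $\lambda=\big(\tfrac{s+1}{s_0+1}\big)^{1/3}$. The 3D energy density. For $\mathbf{G}\in\mathbb{R}^{3\times3}$ with $\mathbf{G}\mathbf{m}\neq 0$, set $\mathbf{n}=\mathbf{G}\mathbf{m}/|\mathbf{G}\mathbf{m}|$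 and $$\mathbf{L}_{\mathbf{m}}=(s_0+1)^{-1/3}(\mathrm{Id}_3+s_0\,\mathbf{m}\otimes\mathbf{m}),\qquad \mathbf{L}_{\mathbf{n}}=(s+1)^{-1/3}(\mathrm{Id}_3+s\,\mathbf{n}\otimes\mathbf{n}).$$ Then $$W_{3D}\big((\mathbf{x}',0),\mathbf{G}\big)=\operatorname{tr}\big(\mathbf{G}^T\mathbf{L}_{\mathbf{n}}^{-1}\mathbf{G}\mathbf{L}_{\mathbf{m}}\big)-3 .$$ The stretching energy density. For $\mathbf{F}\in\mathbb{R}^{3\times2}$ of rank 2, let $\mathrm{I}(\mathbf{F})=\mathbf{F}^T\mathbf{F}$, $J(\mathbf{F})=\det\mathrm{I}(\mathbf{F})$ and $C_{\mathbf{m}}(\mathbf{F})=\mathbf{m}\cdot\mathrm{I}(\mathbf{F})\mathbf{m}$. Then $$W_{str}(\mathbf{x}',\mathbf{F})=\lambda\Big[\frac{1}{J(\mathbf{F})}+\frac{1}{s+1}\Big(\operatorname{tr}\mathrm{I}(\mathbf{F})+s_0\,C_{\mathbf{m}}(\mathbf{F})+s\,\frac{J(\mathbf{F})}{C_{\mathbf{m}}(\mathbf{F})}\Big)\Big]-3 .$$ *)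

From HB Require Import structures.
From mathcomp Require Import all_boot all_order all_algebra.
From mathcomp Require Import reals exp.
Set Implicit Arguments. Unset Strict Implicit. Unset Printing Implicit Defensive.
Import Order.TTheory GRing.Theory Num.Theory.
Local Open Scope ring_scope.

Section Defs.
Variable R : realType.

Definition i0 : 'I_2 := @Ordinal 2 0 isT.
Definition i1 : 'I_2 := @Ordinal 2 1 isT.

(* the planar director m : R^2 identified with (m,0)^T in R^3 *)
Definition embed3 (m : 'cV[R]_2) : 'cV[R]_3 :=
  \col_(i < 3) (if (i : nat) == 0%N then m i0 0
                else if (i : nat) == 1%N then m i1 0 else 0).

Definition vnorm (v : 'cV[R]_3) : R := Num.sqrt (\sum_i v i 0 ^+ 2).

Definition crossv (u v : 'cV[R]_3) : 'cV[R]_3 :=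
  \col_(i < 3)
    (if (i : nat) == 0%N then u (inord 1) 0 * v (inord 2) 0 - u (inord 2) 0 * v (inord 1) 0
     else if (i : nat) == 1%N then u (inord 2) 0 * v (inord 0) 0 - u (inord 0) 0 * v (inord 2) 0
     else u (inord 0) 0 * v (inord 1) 0 - u (inord 1) 0 * v (inord 0) 0).

Definition bvec (F : 'M[R]_(3,2)) : 'cV[R]_3 :=
  let c := crossv (col i0 F) (col i1 F) in (vnorm c ^+ 2)^-1 *: c.

Definition augment (F : 'M[R]_(3,2)) (b : 'cV[R]_3) : 'M[R]_3 :=
  \matrix_(i < 3, j < 3)
    (if (j : nat) == 0%N then F i i0 else if (j : nat) == 1%N then F i i1 else b i 0).

Definition Lstep (t : R) (v : 'cV[R]_3) : 'M[R]_3 :=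
  (powR (t + 1) (- 3%:R^-1)) *: (1%:M + t *: (v *m v^T)).

Definition W3D (s s0 : R) (m : 'cV[R]_2) (G : 'M[R]_3) : R :=
  let m3 := embed3 m in
  let Gm := G *m m3 in
  let n := (vnorm Gm)^-1 *: Gm in
  \tr (G^T *m invmx (Lstep s n) *m G *m Lstep s0 m3) - 3%:R.

Definition Imat (F : 'M[R]_(3,2)) : 'M[R]_2 := F^T *m F.
Definition Jdet (F : 'M[R]_(3,2)) : R := \det (Imat F).
Definition Cm (m : 'cV[R]_2) (F : 'M[R]_(3,2)) : R := (m^T *m Imat F *m m) 0 0.

Definition lam (s s0 : R) : R := powR ((s + 1) / (s0 + 1)) 3%:R^-1.

Definition Wstr (s s0 : R) (m : 'cV[R]_2) (F : 'M[R]_(3,2)) : R :=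
  lam s s0 * ((Jdet F)^-1 + (s + 1)^-1 *
     (\tr (Imat F) + s0 * Cm m F + s * (Jdet F / Cm m F))) - 3%:R.

End Defs.

From HB Require Import structures.
From mathcomp Require Import all_boot all_order all_algebra.
From mathcomp Require Import reals exp.
From mathcomp Require Import ring lra.
Set Implicit Arguments. Unset Strict Implicit. Unset Printing Implicit Defensive.
Import Order.TTheory GRing.Theory Num.Theory.
Local Open Scope ring_scope.

(* Put G = [F, b] with b = (F1 x F2) / |F1 x F2|^2.  Then G (m, 0) = F m, so the
   director n of W_3D is F m / |F m| and |F m|^2 = C_m.  Since b is orthogonal to
   the columns of F and |b|^2 = 1 / J, we get G G^T = F F^T + b b^T, whence
   |G|^2 = tr I + 1 / J and |G^T F m|^2 = m . I^2 m = tr I * C_m - J by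
   Cayley-Hamilton for the 2 x 2 matrix I (m is a unit vector).  Inverting L_n by
   the Sherman-Morrison formula turns the trace in W_3D into a rational expression
   in tr I, J and C_m, which is the one defining W_str. *)

Local Notation "''[' u , v ]" := ((u^T *m v) 0 0) : ring_scope.

(* Rewriting a matrix with [mx_inordE] before expanding its products and sums
   makes every entry a literal [A (inord k) (inord l)], so [ring] sees equal
   entries as equal atoms. *)
Lemma mx_inordE (R : Type) m n (A : 'M[R]_(m.+1, n.+1)) :
  A = \matrix_(i, j) A (inord i) (inord j).
Proof. by apply/matrixP => i j; rewrite mxE !inord_val. Qed.

Ltac expand_entries :=
  do 4!rewrite ?(mxE, big_ord_recr, big_ord0) /=; rewrite ?inordK //.

Section MatrixIdentities.
Variable R : comPzRingType.

Lemma det_mx22 (A : 'M[R]_2) : \det A = A 0 0 * A 1 1 - A 0 1 * A 1 0.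
Proof.
rewrite (mx_inordE A) (expand_det_row _ 0) !big_ord_recr big_ord0.
rewrite /cofactor !det_mx11 !mxE /= /bump /=.
ring.
Qed.

Lemma Cayley_Hamilton_mx22 (A : 'M[R]_2) : A *m A = \tr A *: A - (\det A)%:M.
Proof.
rewrite det_mx22 /mxtrace (mx_inordE A); apply/matrixP => i j.
case: i j => [[|[|//]] ?] [[|[|//]] ?]; expand_entries; ring.
Qed.

Lemma mxtrace_mul_outer n (Q : 'M[R]_n) (x y : 'cV[R]_n) :
  \tr (Q *m (x *m y^T)) = '[y, Q *m x].
Proof. by rewrite mulmxA mxtrace_mulC trace_mx11 mulmxA. Qed.

Lemma trmxZ m n (k : R) (A : 'M[R]_(m, n)) : (k *: A)^T = k *: A^T.
Proof. exact: linearZ. Qed.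

Lemma dotC n (x y : 'cV[R]_n) : '[x, y] = '[y, x].
Proof. by rewrite !mxE; apply: eq_bigr => i _; rewrite !mxE mulrC. Qed.

Lemma mxtrace_rank1_updates n (G : 'M[R]_n) (w v : 'cV[R]_n) (t u : R) :
  \tr (G^T *m (1%:M - t *: (w *m w^T)) *m G *m (1%:M + u *: (v *m v^T))) =
  \tr (G^T *m G) + u * '[G *m v, G *m v] - t * '[G^T *m w, G^T *m w]
    - t * u * '[G^T *m w, v] ^+ 2.
Proof.
set z := G^T *m w.
have GPG : G^T *m (w *m w^T) *m G = z *m z^T by rewrite trmx_mul trmxK !mulmxA.
rewrite mulmxBr mulmx1 mulmxBl -scalemxAr -scalemxAl GPG.
rewrite mulmxBl mulmxDr mulmx1 -scalemxAr.
rewrite linearB !linearD /= mulmx1 -!scalemxAl -scalemxAr !mxtraceZ.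
rewrite !mxtrace_mul_outer [\tr (z *m _)]mxtrace_mulC trace_mx11.
have -> : '[v, z *m z^T *m v] = '[z, v] ^+ 2.
  by rewrite mulmxA mulmxA -(mulmxA _ z^T) mxE big_ord1 dotC expr2.
have -> : '[v, G^T *m G *m v] = '[G *m v, G *m v] by rewrite trmx_mul !mulmxA.
ring.
Qed.

End MatrixIdentities.

Lemma invmx_rank1_update (R : fieldType) n (a t : R) (v : 'cV[R]_n) :
  a != 0 -> t + 1 != 0 -> '[v, v] = 1 ->
  invmx (a *: (1%:M + t *: (v *m v^T))) = a^-1 *: (1%:M - (t / (t + 1)) *: (v *m v^T)).
Proof.
move=> a0 t1 vv.
have P2 : (v *m v^T) *m (v *m v^T) = v *m v^T.
  by rewrite mulmxA -(mulmxA v) [v^T *m v]mx11_scalar vv mul_mx_scalar scale1r.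
have inv : (a *: (1%:M + t *: (v *m v^T))) *m
           (a^-1 *: (1%:M - (t / (t + 1)) *: (v *m v^T))) = 1%:M.
  rewrite -scalemxAl -scalemxAr scalerA mulfV // scale1r.
  rewrite mulmxDl mulmxBr mulmxBr !mul1mx mulmx1 -!scalemxAl -!scalemxAr P2 scalerA.
  by apply/matrixP => i j; rewrite !mxE; field.
have [unit_L _] := mulmx1_unit inv.
by rewrite -[RHS](mulKmx unit_L) inv mulmx1.
Qed.

Section GramForm.
Variable R : realFieldType.

Lemma dot_self_eq0 n (x : 'cV[R]_n) : ('[x, x] == 0) = (x == 0).
Proof.
rewrite mxE psumr_eq0 => [|i _]; last by rewrite mxE -expr2 sqr_ge0.
apply/allP/eqP => [x0 | -> i _]; last by rewrite /= !mxE mulr0.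
apply/colP => i; have /eqP := x0 i (mem_index_enum _).
by rewrite !mxE -expr2 => /eqP; rewrite sqrf_eq0 => /eqP.
Qed.

Lemma gram_form_eq0 m n (F : 'M[R]_(m, n)) (x : 'cV[R]_n) :
  \rank F = n -> '[F *m x, F *m x] = 0 -> x = 0.
Proof.
move=> rkF /eqP; rewrite dot_self_eq0 -trmx_eq0 trmx_mul mulmx_free_eq0.
  by rewrite trmx_eq0 => /eqP.
by rewrite /row_free mxrank_tr rkF.
Qed.

Lemma det_gram_neq0 m n (F : 'M[R]_(m, n)) : \rank F = n -> \det (F^T *m F) != 0.
Proof.
move=> rkF; apply/negP => /det0P [v v0 vFF]; case/eqP: v0.
apply: trmx_inj; rewrite trmx0; apply: (gram_form_eq0 rkF).
by rewrite trmx_mul trmxK !mulmxA -(mulmxA v) vFF mul0mx mxE.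
Qed.

End GramForm.

Lemma powRV (R : realType) (y r : R) : 0 <= y -> powR y^-1 r = (powR y r)^-1.
Proof. by move=> y0; rewrite -powR_inv1 // -powRrM mulN1r powRN. Qed.

Section Energies.
Variable R : realType.
Implicit Types (m : 'cV[R]_2) (F : 'M[R]_(3, 2)) (G : 'M[R]_3) (b u v : 'cV[R]_3).

Lemma augment_row_mx F b : augment F b = row_mx F b.
Proof.
apply/matrixP => i j; rewrite !mxE; case: splitP => k.
- by move=> ->; case: k => [[|[|//]] ?] /=; congr (F i _); apply: val_inj.
- by rewrite (ord1 k) => ->.
Qed.

Lemma embed3_col_mx m : embed3 m = col_mx m 0.
Proof.
apply/matrixP => i j; rewrite !mxE ord1; case: splitP => k.
- by move=> ->; case: k => [[|[|//]] ?] /=; congr (m _ _); apply: val_inj.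
- by rewrite (ord1 k) => ->; rewrite mxE.
Qed.

Lemma augment_mul_embed3 F b m : augment F b *m embed3 m = F *m m.
Proof.
by rewrite augment_row_mx embed3_col_mx (mul_row_col F b m 0) mulmx0 addr0.
Qed.

Lemma augment_mul_tr F b : augment F b *m (augment F b)^T = F *m F^T + b *m b^T.
Proof. by rewrite augment_row_mx (tr_row_mx F b) (mul_row_col F b F^T b^T). Qed.

Lemma mxtrace_augment F b : \tr ((augment F b)^T *m augment F b) = \tr (Imat F) + '[b, b].
Proof.
rewrite mxtrace_mulC augment_mul_tr mxtraceD [\tr (F *m _)]mxtrace_mulC.
by rewrite [\tr (b *m _)]mxtrace_mulC trace_mx11.
Qed.

Lemma crossv_dotl u v : '[u, crossv u v] = 0.
Proof. rewrite /crossv (mx_inordE u) (mx_inordE v); expand_entries; ring. Qed.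

Lemma crossv_dotr u v : '[v, crossv u v] = 0.
Proof. rewrite /crossv (mx_inordE u) (mx_inordE v); expand_entries; ring. Qed.

Lemma dot_crossv u v : '[crossv u v, crossv u v] = '[u, u] * '[v, v] - '[u, v] ^+ 2.
Proof. rewrite /crossv (mx_inordE u) (mx_inordE v); expand_entries; ring. Qed.

Lemma mulmx_trmx_entry k p q (A : 'M[R]_(k, p)) (B : 'M[R]_(k, q)) i j :
  (A^T *m B) i j = '[col i A, col j B].
Proof. by rewrite !mxE; apply: eq_bigr => l _; rewrite !mxE. Qed.

Lemma trmx_mul_crossv_cols F : F^T *m crossv (col i0 F) (col i1 F) = 0.
Proof.
apply/colP => j; rewrite [RHS]mxE mulmx_trmx_entry col_id.
have [->|->] : j = i0 \/ j = i1.
  by case: j => [[|[|//]] ?]; [left | right]; apply: val_inj.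
- by rewrite crossv_dotl.
- by rewrite crossv_dotr.
Qed.

Lemma Jdet_cols F :
  Jdet F = '[col i0 F, col i0 F] * '[col i1 F, col i1 F] - '[col i0 F, col i1 F] ^+ 2.
Proof.
have -> : i0 = 0 :> 'I_2 by apply: val_inj.
have -> : i1 = 1 :> 'I_2 by apply: val_inj.
rewrite /Jdet /Imat det_mx22 !(mulmx_trmx_entry F F).
by rewrite (dotC (col 1 F) (col 0 F)) expr2.
Qed.

Lemma vnorm_sqr v : vnorm v ^+ 2 = '[v, v].
Proof.
rewrite /vnorm sqr_sqrtr; last by apply: sumr_ge0 => i _; rewrite sqr_ge0.
by rewrite mxE; apply: eq_bigr => i _; rewrite mxE expr2.
Qed.

Lemma bvecE F : bvec F = (Jdet F)^-1 *: crossv (col i0 F) (col i1 F).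
Proof. by rewrite /bvec /= vnorm_sqr dot_crossv -Jdet_cols. Qed.

Lemma trmx_mul_bvec F : F^T *m bvec F = 0.
Proof. by rewrite bvecE -scalemxAr trmx_mul_crossv_cols scaler0. Qed.

Lemma dot_bvec F : '[bvec F, bvec F] = (Jdet F)^-1.
Proof.
rewrite bvecE trmxZ -scalemxAl -scalemxAr scalerA mxE dot_crossv -Jdet_cols.
by have [->|J0] := eqVneq (Jdet F) 0; [rewrite invr0 mulr0 | field].
Qed.

Lemma CmE m F : Cm m F = '[F *m m, F *m m].
Proof. by rewrite /Cm /Imat trmx_mul !mulmxA. Qed.

Lemma dot_self_cV2 m : '[m, m] = m i0 0 ^+ 2 + m i1 0 ^+ 2.
Proof. rewrite (mx_inordE m) /i0 /i1; expand_entries; ring. Qed.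

Lemma lamE (s s0 : R) : -1 < s -> -1 < s0 ->
  lam s s0 = (powR (s + 1) (- 3%:R^-1))^-1 * powR (s0 + 1) (- 3%:R^-1).
Proof.
move=> hs hs0; rewrite /lam !powRN invrK powRM ?powRV ?invr_ge0 //; lra.
Qed.

Lemma W3DE (s s0 : R) m G : -1 < s -> -1 < s0 -> G *m embed3 m != 0 ->
  let g := G *m embed3 m in
  W3D s s0 m G = lam s s0 * (\tr (G^T *m G) + s0 * '[g, g]
    - s / (s + 1) * ('[G^T *m g, G^T *m g] / '[g, g] + s0 * '[g, g])) - 3%:R.
Proof.
move=> hs hs0 g0 g; rewrite /W3D -/g lamE // /Lstep.
set a := powR (s + 1) _; set b := powR (s0 + 1) _.
have a0 : a != 0 by rewrite powR_eq0 negb_and; apply/orP; left; apply/eqP; lra.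
have s1 : s + 1 != 0 by apply/eqP; lra.
have gg : '[g, g] != 0 by rewrite dot_self_eq0.
set n := (vnorm g)^-1 *: g.
have nnE : n *m n^T = '[g, g]^-1 *: (g *m g^T).
  by rewrite trmxZ -scalemxAl -scalemxAr scalerA -expr2 exprVn vnorm_sqr.
have nn : '[n, n] = 1.
  by rewrite trmxZ -scalemxAl -scalemxAr scalerA mxE -expr2 exprVn vnorm_sqr mulVf.
rewrite invmx_rank1_update // nnE scalerA.
rewrite -!scalemxAr -!scalemxAl -?scalemxAr -?scalemxAl !mxtraceZ mxtrace_rank1_updates -/g.
have -> : '[G^T *m g, embed3 m] = '[g, g] by rewrite trmx_mul trmxK -mulmxA.
by field; rewrite a0 s1 gg.
Qed.

Lemma Cm_neq0 m F : \rank F = 2 -> m != 0 -> Cm m F != 0.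
Proof. by move=> rkF m0; apply: contra_neq m0; rewrite CmE; exact: gram_form_eq0. Qed.

Lemma dot_tr_augment_bvec m F :
  let w := (augment F (bvec F))^T *m (F *m m) in
  '[w, w] = '[m, Imat F *m Imat F *m m].
Proof.
rewrite /= trmx_mul trmxK mulmxA -(mulmxA _ (augment F _)) augment_mul_tr.
have Fmb : (F *m m)^T *m bvec F = 0 by rewrite trmx_mul -mulmxA trmx_mul_bvec mulmx0.
rewrite mulmxDr mulmxDl [_ *m (bvec F *m _)]mulmxA Fmb !mul0mx addr0.
by rewrite /Imat trmx_mul !mulmxA.
Qed.

Lemma W3D_augment_bvec (s s0 : R) m F :
  -1 < s -> -1 < s0 -> \rank F = 2 -> '[m, m] = 1 ->
  W3D s s0 m (augment F (bvec F)) = lam s s0 * (\tr (Imat F) + (Jdet F)^-1 + s0 * Cm m F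
    - s / (s + 1) * ((\tr (Imat F) * Cm m F - Jdet F) / Cm m F + s0 * Cm m F)) - 3%:R.
Proof.
move=> hs hs0 rkF mm.
have m0 : m != 0 by rewrite -dot_self_eq0 mm oner_neq0.
have Fm0 : F *m m != 0 by rewrite -dot_self_eq0 -CmE; exact: Cm_neq0.
have CH : '[m, Imat F *m Imat F *m m] = \tr (Imat F) * Cm m F - Jdet F.
  rewrite Cayley_Hamilton_mx22 mulmxBl mul_scalar_mx -scalemxAl mulmxBr -!scalemxAr.
  by rewrite mxE [(- _ : 'M_1) 0 0]mxE ![(_ *: _ : 'M_1) 0 0]mxE mm mulr1 mulmxA.
rewrite W3DE ?augment_mul_embed3 // -CmE mxtrace_augment dot_bvec.
by rewrite dot_tr_augment_bvec CH.
Qed.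

End Energies.

Theorem lemma2p1 (R : realType) (s s0 : R) (m : 'cV[R]_2) (F : 'M[R]_(3,2))
  (hs : -1 < s) (hs0 : -1 < s0)
  (hm : m i0 0 ^+ 2 + m i1 0 ^+ 2 = 1)
  (hF : \rank F = 2%N) :
  Wstr s s0 m F = W3D s s0 m (augment F (bvec F)).
Proof.
have mm : '[m, m] = 1 by rewrite dot_self_cV2.
have m0 : m != 0 by rewrite -dot_self_eq0 mm oner_neq0.
have C0 := Cm_neq0 hF m0.
have J0 : Jdet F != 0 := det_gram_neq0 hF.
have s1 : s + 1 != 0 by apply/eqP; lra.
rewrite W3D_augment_bvec // /Wstr.
by field; rewrite C0 J0 s1.
Qed.
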